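(* Let $0<p<1$, $q=1-p$, $N\ge1$, let $\sigma=(\sigma_1,\dots,\sigma_N)\in S_N$, let $\mathbf{x}=(x_1,\dots,x_N)$ and $\mathbf{y}=(y_1,\dots,y_N)$ be integer vectors with $x_1>x_2>\dots>x_N$ and $y_1>y_2>\dots>y_N$, let $t\in\mathbb{Z}$, and let $$\mathcal{F}_\sigma=\prod_{i=1}^N F_{\sigma_i-i}(x_i-y_{\sigma_i},t).$$ (1) If $t=0$, then $\mathcal{F}_\sigma=0$ unless $\sigma$ is the identity permutation and $\mathbf{x}=\mathbf{y}$. (2) Let $t=1$ and let $(i_1,\dots,i_k)$ be a cycle of $\sigma$ with $k>1$ elements, i.e. $\sigma_{i_1}=i_2,\sigma_{i_2}=i_3,\dots,\sigma_{i_k}=i_1$. Then $\mathcal{F}_\sigma=0$ unless, up to a cyclic shift of the indices of the cycle, $i_2=i_1+1,\dots,i_k=i_1+k-1$ and $y_{i_1}=x_{i_1}$, $x_{i_2}=y_{i_2}=x_{i_1}-1,\dots,x_{i_k}=y_{i_k}=x_{i_1}-k+1$.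
   Context: For $n,x\in\mathbb{Z}$: $F_n(x,t)=\frac{1}{2\pi i}\oint_{\Gamma_0}\frac{dw}{w}\left(q+\frac{p}{w}\right)^t(1-w)^{-n}w^x$ for $t\ge0$, and $F_n(x,t)=0$ for $t<0$, where $\Gamma_0$ is a positively oriented contour encircling the origin and leaving $w=1$ outside. *)

From HB Require Import structures.
From mathcomp Require Import all_boot all_order all_algebra all_fingroup.
Set Implicit Arguments. Unset Strict Implicit. Unset Printing Implicit Defensive.
Import Order.TTheory GRing.Theory Num.Theory.
Local Open Scope ring_scope.

(* Coefficient of w^m in the power series expansion at w = 0 of (1-w)^(-n),
   n an arbitrary integer: the generalized binomial
   (-1)^m binom(-n, m) = n (n+1) ... (n+m-1) / m!, and 0 for m < 0. *)
Definition invpow_coef (R : fieldType) (n m : int) : R :=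
  match m with
  | Posz m => (\prod_(i < m) (n + (i : nat)%:Z)%:~R) / (m`!)%:R
  | Negz _ => 0
  end.

(* F_n(x,t) = (1/2 pi i) \oint_{Gamma_0} dw/w (q + p/w)^t (1-w)^(-n) w^x,
   Gamma_0 around 0 leaving 1 outside, q = 1 - p; F_n(x,t) = 0 for t < 0.
   The contour integral is the residue at 0, i.e. the coefficient of w^(-x)
   in the Laurent expansion of (q + p/w)^t (1-w)^(-n) at 0:
   sum_{j=0}^t C(t,j) q^(t-j) p^j [w^(j-x)] (1-w)^(-n). *)
Definition F (R : fieldType) (p : R) (n x t : int) : R :=
  match t with
  | Posz t => \sum_(j < t.+1)
       ('C(t, j))%:R * (1 - p) ^+ (t - j) * p ^+ j
         * invpow_coef R n ((j : nat)%:Z - x)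
  | Negz _ => 0
  end.

(* The product  F_sigma = prod_{i=1}^N F_{sigma_i - i}(x_i - y_{sigma_i}, t),
   indices shifted to 0..N-1 (differences sigma_i - i are unchanged). *)
Definition Fsigma (R : fieldType) (p : R) (N : nat) (s : 'S_N)
  (x y : 'I_N -> int) (t : int) : R :=
  \prod_(i < N) F p ((s i : nat)%:Z - (i : nat)%:Z) (x i - y (s i)) t.

From HB Require Import structures.
From mathcomp Require Import all_boot all_order all_algebra all_fingroup.
Import Order.TTheory GRing.Theory Num.Theory.
From mathcomp Require Import zify.
Set Implicit Arguments. Unset Strict Implicit. Unset Printing Implicit Defensive.
Local Open Scope ring_scope.

(* F_n(z,t) is a residue at w = 0, so it vanishes unless some w^(j-z) with
   0 <= j <= t occurs in (1-w)^(-n), which for n <= 0 is a polynomial of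
   degree -n.  Hence a nonzero factor F_{s i - i}(x_i - y_{s i}, t) forces
   x_i - y_{s i} <= t and, at a weak descent s i <= i, also
   x_i - y_{s i} >= s i - i.  Since x and y decrease strictly,
   x_j <= x_i - (j - i) for i <= j, and likewise for y.  For t = 0 these
   bounds already contradict the existence of a least point moved by s.  For
   t = 1, followed around a cycle of s from its least element m, they can only
   close up if the cycle visits m, m+1, ... in this order and every one of
   them is an equality. *)

Lemma invpow_coef_neq0 (R : fieldType) (n m : int) :
  invpow_coef R n m != 0 -> 0 <= m /\ (0 < n \/ m <= - n).
Proof.
case: m => [m|m] /=; last by rewrite eqxx.
move=> nz_coef; split=> //.
have [n_gt0|n_le0] := boolP (0 < n); [by left | right].
rewrite leNgt; apply/negP => lt_n_m.
have lt_absn_m : (absz n < m)%N by lia.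
(* for n <= 0 the factor n + |n| of the rising product vanishes *)
move: nz_coef; rewrite (bigD1 (Ordinal lt_absn_m)) //=.
have -> : n + (absz n)%:Z = 0 by lia.
by rewrite !mul0r eqxx.
Qed.

Definition F_support (n z : int) (t : nat) : Prop :=
  z <= t%:Z /\ (0 < n \/ n <= z).

Lemma F_neq0_support (R : fieldType) (p : R) (n z : int) (t : nat) :
  F p n z t != 0 -> F_support n z t.
Proof.
move=> nzF.
have /existsP [j nz_coef] :
    [exists j : 'I_t.+1, invpow_coef R n ((j : nat)%:Z - z) != 0].
  apply: contraNT nzF => /existsPn all0; rewrite /F big1 // => j _.
  by rewrite (eqP (negPn (all0 j))) mulr0.
have := ltn_ord j; have /invpow_coef_neq0 := nz_coef; rewrite /F_support; lia.
Qed.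

Lemma Fsigma_neq0_support (R : fieldType) (p : R) N (s : 'S_N)
    (x y : 'I_N -> int) (t : nat) :
  Fsigma p s x y t != 0 ->
  forall i, F_support ((s i : nat)%:Z - (i : nat)%:Z) (x i - y (s i)) t.
Proof. by move=> /prodf_neq0 nzF i; apply: F_neq0_support (nzF i isT). Qed.

Section StrictlyDecreasing.
Variables (N : nat) (x : 'I_N -> int).
Hypothesis x_decr : forall i j : 'I_N, (i < j)%N -> x j < x i.

Lemma decr_gap (i j : 'I_N) :
  (i <= j)%N -> x j + ((j : nat)%:Z - (i : nat)%:Z) <= x i.
Proof.
move=> le_ij; have [n def_j] : exists n, (j : nat) = (i + n)%N.
  by exists (j - i)%N; lia.
elim: n j le_ij def_j => [|n IHn] j le_ij def_j.
  have -> : j = i by apply/val_inj; rewrite /= def_j addn0.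
  by rewrite subrr addr0.
have lt_jN : (i + n < N)%N by have := ltn_ord j; lia.
have := IHn (Ordinal lt_jN) (leq_addr n i) erefl.
have := @x_decr (Ordinal lt_jN) j ltac:(rewrite /=; lia).
rewrite /= def_j; lia.
Qed.

End StrictlyDecreasing.

Lemma cycle_rotate_to_min N (s : 'S_N) (k : nat) (c : nat -> 'I_N) :
  (0 < k)%N ->
  (forall j1 j2, (j1 < k)%N -> (j2 < k)%N -> c j1 = c j2 -> j1 = j2) ->
  (forall j, (j < k)%N -> s (c j) = c ((j + 1) %% k)%N) ->
  exists2 r, (r < k)%N &
    let d := fun j => c ((j + r) %% k)%N in
    [/\ forall j1 j2, (j1 < k)%N -> (j2 < k)%N -> d j1 = d j2 -> j1 = j2,
        forall j, (j.+1 < k)%N -> s (d j) = d j.+1,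
        s (d k.-1) = d 0%N
      & forall j, (j < k)%N -> (d 0%N <= d j)%N].
Proof.
move=> k_gt0 c_inj c_succ.
have : exists n, [exists j : 'I_k, (c j : nat) == n].
  by exists (c 0%N : nat); apply/existsP; exists (Ordinal k_gt0).
case/ex_minnP=> m /existsP [r /eqP c_r] m_min.
exists r => //=; split.
- move=> j1 j2 lt_j1k lt_j2k eq_d.
  have /eqP := c_inj _ _ (ltn_pmod _ k_gt0) (ltn_pmod _ k_gt0) eq_d.
  by rewrite eqn_modDr !modn_small // => /eqP.
- by move=> j lt_j1k; rewrite c_succ ?ltn_pmod // modnDml addn1 addSn.
- rewrite c_succ ?ltn_pmod // modnDml add0n.
  have -> : (k.-1 + r + 1 = r + k)%N by lia.
  by rewrite modnDr.
- move=> j lt_jk; rewrite add0n modn_small // c_r; apply: m_min.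
  by apply/existsP; exists (Ordinal (ltn_pmod (j + r) k_gt0)).
Qed.

Section SupportCombinatorics.
Variables (N : nat) (s : 'S_N) (x y : 'I_N -> int).
Hypothesis x_decr : forall i j : 'I_N, (i < j)%N -> x j < x i.
Hypothesis y_decr : forall i j : 'I_N, (i < j)%N -> y j < y i.

Section TimeZero.
Hypothesis supp : forall i,
  F_support ((s i : nat)%:Z - (i : nat)%:Z) (x i - y (s i)) 0.

Lemma support0_fix_step (i : 'I_N) :
  (forall j : 'I_N, (j < i)%N -> s j = j) -> s i = i.
Proof.
move=> fix_lt; case: (ltngtP (s i) i) => [lt_si|gt_si|/val_inj //].
  by have /perm_inj eq_si := fix_lt _ lt_si; rewrite eq_si ltnn in lt_si.
pose q := (s^-1)%g i; have s_q : s q = i by rewrite permKV.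
have gt_qi : (i < q)%N.
  case: (ltngtP q i) => [lt_qi|//|/val_inj eq_qi].
    have := fix_lt _ lt_qi; rewrite s_q => eq_iq.
    by rewrite -eq_iq ltnn in lt_qi.
  by move: gt_si; rewrite -{2}eq_qi s_q ltnn.
have := supp q; have := supp i; rewrite /F_support s_q.
have := decr_gap x_decr (ltnW gt_qi); have := decr_gap y_decr (ltnW gt_si).
lia.
Qed.

Lemma support0_perm1 : s = 1%g.
Proof.
have fix_lt n (i : 'I_N) : (i < n)%N -> s i = i.
  elim: n i => [//|n IHn] i.
  rewrite ltnS leq_eqVlt => /predU1P [eq_in|]; last exact: IHn.
  by apply: support0_fix_step => j; rewrite eq_in; apply: IHn.
by apply/permP => i; rewrite perm1 (fix_lt N).
Qed.

Lemma support0_eq i : x i = y i.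
Proof. by have := supp i; rewrite /F_support support0_perm1 perm1; lia. Qed.

End TimeZero.

Section TimeOne.
Hypothesis supp : forall i,
  F_support ((s i : nat)%:Z - (i : nat)%:Z) (x i - y (s i)) 1.

Section Cycle.
Variables (k : nat) (d : nat -> 'I_N).
Hypothesis k_gt1 : (1 < k)%N.
Hypothesis d_inj :
  forall j1 j2, (j1 < k)%N -> (j2 < k)%N -> d j1 = d j2 -> j1 = j2.
Hypothesis d_succ : forall j, (j.+1 < k)%N -> s (d j) = d j.+1.
Hypothesis d_last : s (d k.-1) = d 0.
Hypothesis d_min : forall j, (j < k)%N -> (d 0 <= d j)%N.

Lemma cycle_last_gt : (d 0 < d k.-1)%N.
Proof.
rewrite ltn_neqAle d_min ?andbT; last by lia.
apply/eqP => /val_inj eq_d.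
by have := @d_inj 0 k.-1 ltac:(lia) ltac:(lia) eq_d; lia.
Qed.

(* The descent d (k-1) -> d 0 gives y (d 0) <= x (d (k-1)) + (d (k-1) - d 0),
   while every ascent d j -> d (j+1) bounds x (d j) by y (d (j+1)) + 1. *)
Lemma cycle_step j :
  (j.+1 < k)%N -> (d j < d k.-1)%N -> (d j.+1 <= (d j).+1)%N.
Proof.
move=> lt_j1k lt_j_last.
have := supp (d k.-1); have := supp (d j).
rewrite /F_support d_last d_succ //.
have := cycle_last_gt.
have := decr_gap x_decr (ltnW lt_j_last).
have := decr_gap y_decr (d_min lt_j1k).
lia.
Qed.

Lemma cycle_fresh j l :
  (forall i, (i <= j)%N -> (d i : nat) = (d 0 + i)%N) ->
  (j < l)%N -> (l < k)%N -> (d 0 + j < d l)%N.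
Proof.
move=> d_init lt_jl lt_lk; rewrite ltnNge; apply/negP => le_dl.
have ge_dl := d_min lt_lk.
have eq_dl : d (d l - d 0)%N = d l by apply/val_inj; rewrite /= d_init; lia.
by have := @d_inj (d l - d 0) l ltac:(lia) lt_lk eq_dl; lia.
Qed.

Lemma cycle_consecutive j : (j < k)%N -> (d j : nat) = (d 0 + j)%N.
Proof.
move=> lt_jk.
suff d_init : forall i, (i <= j)%N -> (d i : nat) = (d 0 + i)%N.
  exact: d_init.
elim: j lt_jk => [|j IHj] lt_jk i.
  by rewrite leqn0 => /eqP ->; rewrite addn0.
have {IHj} d_init := IHj (ltnW lt_jk).
rewrite leq_eqVlt ltnS => /predU1P [->|]; last exact: d_init.
have lt_last := @cycle_fresh j k.-1 d_init ltac:(lia) ltac:(lia).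
have lt_next := cycle_fresh d_init (ltnSn j) lt_jk.
have := cycle_step lt_jk; rewrite d_init //; lia.
Qed.

(* Around the cycle the bounds chain into
     y (d 0) <= x (d (k-1)) + (k-1) <= x (d j) + j
             <= y (d (j+1)) + j + 1 <= y (d 0),
   so every inequality is an equality. *)
Lemma cycle_values j : (j < k)%N ->
  x (d j) = y (d 0) - (j : nat)%:Z /\ y (d j) = y (d 0) - (j : nat)%:Z.
Proof.
have chain i : (i.+1 < k)%N ->
    [/\ x (d i) = y (d 0) - (i : nat)%:Z,
         y (d i.+1) = y (d 0) - (i.+1 : nat)%:Z
       & x (d k.-1) = y (d 0) - (k.-1 : nat)%:Z].
  move=> lt_i1k.
  have d_i := @cycle_consecutive i ltac:(lia).
  have d_i1 := cycle_consecutive lt_i1k.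
  have d_last_val := @cycle_consecutive k.-1 ltac:(lia).
  have := supp (d k.-1); rewrite /F_support d_last => supp_last.
  have := supp (d i); rewrite /F_support d_succ // => supp_i.
  have le_i_last : (d i <= d k.-1)%N by lia.
  have gap_x := decr_gap x_decr le_i_last.
  have gap_y := decr_gap y_decr (d_min lt_i1k).
  by split; lia.
case: j => [|j] lt_jk.
  by have [x_d0 _ _] := chain 0 k_gt1; rewrite !subr0 in x_d0 *.
have [_ y_dj _] := chain j lt_jk; split=> //.
have [lt_j2k|ge_j2k] := ltnP j.+2 k; first by have [] := chain j.+1 lt_j2k.
have -> : j.+1 = k.-1 by lia.
by have [] := chain 0 k_gt1.
Qed.

End Cycle.

Lemma support1_cycle (k : nat) (c : nat -> 'I_N) :
  (1 < k)%N ->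
  (forall j1 j2, (j1 < k)%N -> (j2 < k)%N -> c j1 = c j2 -> j1 = j2) ->
  (forall j, (j < k)%N -> s (c j) = c ((j + 1) %% k)%N) ->
  exists r : nat, (r < k)%N /\
    let d := fun j : nat => c ((j + r) %% k)%N in
    (forall j, (j < k)%N -> (d j : nat) = (d 0%N : nat) + j)%N /\
    y (d 0%N) = x (d 0%N) /\
    (forall j, (0 < j)%N -> (j < k)%N ->
       x (d j) = x (d 0%N) - (j : nat)%:Z /\
       y (d j) = x (d 0%N) - (j : nat)%:Z).
Proof.
move=> k_gt1 c_inj c_succ.
have [r lt_rk [d_inj d_succ d_last d_min]] :=
  cycle_rotate_to_min (ltnW k_gt1) c_inj c_succ.
exists r; split=> //; set d := fun j => _.
have vals := cycle_values k_gt1 d_inj d_succ d_last d_min.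
have [x_d0 _] := vals 0%N (ltnW k_gt1); rewrite subr0 in x_d0.
split; first exact: cycle_consecutive.
by split=> // j _ lt_jk; rewrite x_d0; apply: vals.
Qed.

End TimeOne.
End SupportCombinatorics.

Theorem lemma4 (R : realFieldType) (p : R) (hp0 : 0 < p) (hp1 : p < 1)
  (N : nat) (hN : (1 <= N)%N) (s : 'S_N) (x y : 'I_N -> int)
  (hx : forall i j : 'I_N, (i < j)%N -> x j < x i)
  (hy : forall i j : 'I_N, (i < j)%N -> y j < y i) :
  (Fsigma p s x y 0 != 0 -> s = 1%g /\ (forall i, x i = y i))
  /\
  (forall (k : nat) (c : nat -> 'I_N),
     (1 < k)%N ->
     (forall j1 j2, (j1 < k)%N -> (j2 < k)%N -> c j1 = c j2 -> j1 = j2) ->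
     (forall j, (j < k)%N -> s (c j) = c ((j + 1) %% k)%N) ->
     Fsigma p s x y 1 != 0 ->
     exists r : nat, (r < k)%N /\
       let d := fun j : nat => c ((j + r) %% k)%N in
       (forall j, (j < k)%N -> (d j : nat) = (d 0%N : nat) + j)%N /\
       y (d 0%N) = x (d 0%N) /\
       (forall j, (0 < j)%N -> (j < k)%N ->
          x (d j) = x (d 0%N) - (j : nat)%:Z /\
          y (d j) = x (d 0%N) - (j : nat)%:Z)).
Proof.
split=> [/(Fsigma_neq0_support (t := 0)) supp |
         k c k_gt1 c_inj c_succ /(Fsigma_neq0_support (t := 1)) supp].
  by split; [exact: support0_perm1 hx hy supp | exact: support0_eq hx hy supp].
exact: support1_cycle hx hy supp k c k_gt1 c_inj c_succ.
Qed.
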